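(* Let $\mathfrak{R}_1=(G,G'_1,S,\phi,\rho_1,\delta_1)$ and $\mathfrak{R}_2=(G,G'_2,S,\phi,\rho_2,\delta_2)$ be reconciliations (of the same $G$, $S$, $\phi$) and $x\in V(G)$. Then $\rho_1(x)$ and $\rho_2(x)$ are comparable in $S$ (one is an ancestor of the other).
   Context: All trees are rooted binary trees whose root node has degree 1; every other non-leaf node $x$ has exactly two children $x_l,x_r$. For nodes of a rooted tree, $y\le x$ means $x$ lies on the path from $y$ to the root; two nodes are comparable if one is $\le$ the other. $G$ is a gene tree, $S$ a species tree, $\phi:L(G)\to L(S)$. A tree $G'$ is an extension of $G$ if $G$ is obtained from $G'$ by pruning some subtrees and suppressing degree-2 nodes; $V(G)\subseteq V(G')$. A map $\rho:V(G')\to V(S)$ is consistent with $S$ if $\rho(root(G'))=root(S)$ and every node $x$ of $G'$ with two children satisfies (D) $\rho(x)=\rho(x_l)=\rho(x_r)$ or (S) $\rho(x)_l=\rho(x_l)$ and $\rho(x)_r=\rho(x_r)$. A reconciliation $(G,G',S,\phi,\rho,\delta)$ consists of an extension $G'$ of $G$, a consistent $\rho$ with $\rho|_{L(G)}=\phi$, and an injective partial function $\delta$ from duplications (nodes satisfying (D)) to losses ($L(G')\setminus L(G)$) with $\rho(x)=\rho(\delta(x))$. *)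

From mathcomp Require Import all_boot.
Set Implicit Arguments. Unset Strict Implicit. Unset Printing Implicit Defensive.

Inductive btree (N : Type) : Type :=
| Leaf : N -> btree N
| Bin : N -> btree N -> btree N -> btree N.
Arguments Leaf {N}.
Arguments Bin {N}.

(* A rooted (planted) tree: a root node of degree 1 whose unique child
   is the root of the binary tree [ptree]. *)
Record ptree_t (N : Type) := Planted { proot : N; ptree : btree N }.
Arguments Planted {N}.

Section Trees.
Variable N : eqType.

Definition root_id (t : btree N) : N :=
  match t with Leaf x => x | Bin x _ _ => x end.

Fixpoint bnodes (t : btree N) : seq N :=
  match t with
  | Leaf x => [:: x]
  | Bin x l r => x :: bnodes l ++ bnodes r
  end.

Fixpoint bleaves (t : btree N) : seq N :=
  match t with
  | Leaf x => [:: x]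
  | Bin _ l r => bleaves l ++ bleaves r
  end.

Definition pnodes (T : ptree_t N) : seq N := proot T :: bnodes (ptree T).
Definition pleaves (T : ptree_t N) : seq N := bleaves (ptree T).

Definition wf_tree (T : ptree_t N) : bool := uniq (pnodes T).

Fixpoint bkids (t : btree N) (v : N) : option (N * N) :=
  match t with
  | Leaf _ => None
  | Bin x l r =>
      if x == v then Some (root_id l, root_id r)
      else match bkids l v with
           | Some p => Some p
           | None => bkids r v
           end
  end.

Definition kids (T : ptree_t N) (v : N) : option (N * N) := bkids (ptree T) v.

(* nodes of the subtree rooted at v (empty if v is not a node of t) *)
Fixpoint bsub (t : btree N) (v : N) : seq N :=
  match t with
  | Leaf x => if x == v then [:: x] else [::]
  | Bin x l r => if x == v then bnodes t else bsub l v ++ bsub r v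
  end.

(* y <= x : x lies on the path from y to the root *)
Definition tree_le (T : ptree_t N) (y x : N) : Prop :=
  (x = proot T /\ y \in pnodes T) \/ (x <> proot T /\ y \in bsub (ptree T) x).

Definition tree_comparable (T : ptree_t N) (x y : N) : Prop := tree_le T x y \/ tree_le T y x.

(* Pruning the subtrees rooted at the nodes in P and suppressing the
   resulting degree-2 nodes.  [None] means that nothing is left. *)
Fixpoint prune (P : pred N) (t : btree N) : option (btree N) :=
  match t with
  | Leaf x => if P x then None else Some (Leaf x)
  | Bin x l r =>
      if P x then None else
      match prune P l, prune P r with
      | Some l', Some r' => Some (Bin x l' r')
      | Some l', None => Some l'
      | None, Some r' => Some r'
      | None, None => None
      end
  end.

Definition extension (G G' : ptree_t N) : Prop :=
  exists P : pred N, proot G = proot G' /\ prune P (ptree G') = Some (ptree G).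

End Trees.

Section Reconciliation.
Variables NG NS : eqType.

Definition consistent (G' : ptree_t NG) (S : ptree_t NS) (rho : NG -> NS) : Prop :=
  rho (proot G') = proot S /\
  forall x a b, kids G' x = Some (a, b) ->
    (rho x = rho a /\ rho x = rho b) \/ kids S (rho x) = Some (rho a, rho b).

Definition duplication (G' : ptree_t NG) (rho : NG -> NS) (x : NG) : Prop :=
  exists a b, kids G' x = Some (a, b) /\ rho x = rho a /\ rho x = rho b.

Definition reconciliation (G G' : ptree_t NG) (S : ptree_t NS)
    (phi : NG -> NS) (rho : NG -> NS) (delta : NG -> option NG) : Prop :=
  wf_tree G' /\ extension G G' /\
      (forall x, x \in pnodes G' -> rho x \in pnodes S) /\
      consistent G' S rho /\
      (forall x, x \in pleaves G -> rho x = phi x) /\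
      (forall x y, delta x = Some y ->
          [/\ duplication G' rho x, y \in pleaves G', y \notin pleaves G
            & rho x = rho y]) /\
      (forall x1 x2 y, delta x1 = Some y -> delta x2 = Some y -> x1 = x2).

End Reconciliation.

From mathcomp Require Import all_boot.
Set Implicit Arguments. Unset Strict Implicit. Unset Printing Implicit Defensive.

(* Every node x of G lies above some leaf l of G, and l stays below x in the
   extension G'_i, since pruning only removes nodes.  A consistent map sends
   every child to a node below the image of its parent, so rho_i is monotone
   on G'_i and phi l = rho_i l <= rho_i x for i = 1, 2.  Two ancestors of the
   same node of S are comparable. *)

Section BinaryTrees.
Variable N : eqType.
Implicit Types (t l r : btree N) (x v y : N).

Lemma root_id_mem t : root_id t \in bnodes t.
Proof. by case: t => [x|x l r]; rewrite inE eqxx. Qed.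

Lemma bsub_root_id t : bsub t (root_id t) = bnodes t.
Proof. by case: t => [x|x l r] /=; rewrite eqxx. Qed.

Lemma bsub_bin x l r v : x != v -> bsub (Bin x l r) v = bsub l v ++ bsub r v.
Proof. by move=> /negbTE /= ->. Qed.

Lemma bsub_subset t v : {subset bsub t v <= bnodes t}.
Proof.
elim: t => [x|x l IHl r IHr] y /=; first by case: eqP.
case: eqP => // _; rewrite mem_cat inE mem_cat.
by case/orP=> [/IHl|/IHr] ->; rewrite ?orbT.
Qed.

Lemma node_of_bsub t v y : y \in bsub t v -> v \in bnodes t.
Proof.
elim: t => [x|x l IHl r IHr] /=; first by case: eqP => // ->; rewrite mem_head.
case: eqP => [-> _|_]; first by rewrite inE eqxx.
by rewrite mem_cat inE mem_cat => /orP[/IHl|/IHr] ->; rewrite ?orbT.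
Qed.

Lemma bsub_nil t v : v \notin bnodes t -> bsub t v = [::].
Proof.
case E: (bsub t v) => [|y s] // /negP[].
by apply: (@node_of_bsub t v y); rewrite E mem_head.
Qed.

Lemma bsub_self t v : v \in bnodes t -> v \in bsub t v.
Proof.
elim: t => [x|x l IHl r IHr] /=.
  by rewrite inE => /eqP ->; rewrite eqxx mem_head.
case: eqP => [->|/eqP ne]; first by rewrite mem_head.
rewrite inE eq_sym (negbTE ne) /= !mem_cat.
by case/orP=> [/IHl|/IHr] ->; rewrite ?orbT.
Qed.

Lemma bkids_node t v p : bkids t v = Some p -> v \in bnodes t.
Proof.
elim: t p => [x|x l IHl r IHr] p //=.
case: eqP => [-> _|_]; first by rewrite mem_head.
rewrite inE mem_cat; case E: (bkids l v) => [q|] => [_|/IHr ->].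
  by rewrite (IHl _ E) orbT.
by rewrite !orbT.
Qed.

Lemma bkids_bsub t v a b :
  bkids t v = Some (a, b) -> a \in bsub t v /\ b \in bsub t v.
Proof.
elim: t => [x|x l IHl r IHr] //=.
case: (eqVneq x v) => [->|ne].
  by case=> <- <-; rewrite !inE !mem_cat !root_id_mem !orbT.
rewrite !mem_cat; case E: (bkids l v) => [q|].
  by case=> Eq; subst q; case: (IHl E) => -> ->.
by move/IHr => [-> ->]; rewrite !orbT.
Qed.

Lemma uniq_bin x l r : uniq (bnodes (Bin x l r)) ->
  [/\ x \notin bnodes l, x \notin bnodes r, uniq (bnodes l), uniq (bnodes r)
    & {in bnodes l, forall z, z \notin bnodes r}].
Proof.
rewrite /= mem_cat negb_or cat_uniq => /andP[/andP[xl xr] /and3P[ul dlr ur]].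
split=> // z zl; apply/negP => zr.
by move/hasP: dlr; apply; exists z.
Qed.

Lemma bkids_binl x l r v p : uniq (bnodes (Bin x l r)) ->
  bkids l v = Some p -> bkids (Bin x l r) v = Some p.
Proof.
case/uniq_bin=> xl _ _ _ _ E; have vl := bkids_node E.
have xv : x != v by apply: contraNneq xl => ->.
by rewrite /= (negbTE xv) E.
Qed.

Lemma bkids_binr x l r v p : uniq (bnodes (Bin x l r)) ->
  bkids r v = Some p -> bkids (Bin x l r) v = Some p.
Proof.
case/uniq_bin=> _ xr _ _ dlr E; have vr := bkids_node E.
have xv : x != v by apply: contraNneq xr => ->.
have vl : v \notin bnodes l by apply: contraL vr => /dlr.
case El: (bkids l v) => [q|]; first by rewrite (bkids_node El) in vl.
by rewrite /= (negbTE xv) El E.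
Qed.

Lemma bsub_trans t v y : uniq (bnodes t) ->
  y \in bsub t v -> {subset bsub t y <= bsub t v}.
Proof.
elim: t => [x|x l IHl r IHr] U.
  by rewrite /=; case: eqP => // _; rewrite inE => /eqP ->; rewrite eqxx.
case/uniq_bin: (U) => xl xr ul ur dlr.
case: (eqVneq x v) => [<- _ z /bsub_subset|xv]; first by rewrite /= eqxx.
have xz z : z \in bnodes l ++ bnodes r -> x != z.
  by move=> zt; apply: contraTneq zt => <-; rewrite mem_cat negb_or xl.
rewrite bsub_bin // mem_cat => /orP[] yt z.
- have yl := bsub_subset yt.
  rewrite bsub_bin; last by rewrite xz // mem_cat yl.
  rewrite (bsub_nil (dlr _ yl)) cats0.
  by rewrite mem_cat => /(IHl ul yt) ->.
- have yr := bsub_subset yt.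
  have yl : y \notin bnodes l by apply: contraL yr => /dlr.
  rewrite bsub_bin; last by rewrite xz // mem_cat yr orbT.
  rewrite (bsub_nil yl) /=.
  by rewrite mem_cat => /(IHr ur yt) ->; rewrite orbT.
Qed.

Lemma bsub_nested t a b z : uniq (bnodes t) ->
  z \in bsub t a -> z \in bsub t b -> a \in bsub t b \/ b \in bsub t a.
Proof.
elim: t => [x|x l IHl r IHr] U.
  rewrite /=; case: (eqVneq x a) => [<-|_]; case: (eqVneq x b) => [<-|_];
  by rewrite ?eqxx ?mem_head; auto.
case/uniq_bin: (U) => _ _ ul ur dlr.
case: (eqVneq x a) => [<- _ /node_of_bsub xt|xa]; first by right; rewrite /= eqxx.
case: (eqVneq x b) => [<- /node_of_bsub xt _|xb]; first by left; rewrite /= eqxx.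
rewrite !bsub_bin // !mem_cat => /orP[] za /orP[] zb.
- by case: (IHl ul za zb) => ->; [left|right].
- by have := dlr _ (bsub_subset za); rewrite (bsub_subset zb).
- by have := dlr _ (bsub_subset zb); rewrite (bsub_subset za).
- by case: (IHr ur za zb) => ->; rewrite orbT; [left|right].
Qed.

Lemma bsub_leaf t v :
  v \in bnodes t -> exists2 z, z \in bleaves t & z \in bsub t v.
Proof.
elim: t v => [y|y l IHl r IHr] v /=.
  by rewrite inE => /eqP ->; exists y; rewrite ?eqxx mem_head.
case: (eqVneq y v) => [<- _|yv].
  case: (IHl _ (root_id_mem l)) => z zl; rewrite bsub_root_id => zn.
  by exists z; rewrite ?mem_cat ?zl // inE mem_cat zn orbT.
rewrite in_cons eq_sym (negbTE yv) /= mem_cat => /orP[/IHl|/IHr] [z zl zs].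
  by exists z; rewrite mem_cat ?zl ?zs.
by exists z; rewrite mem_cat ?zl ?zs ?orbT.
Qed.

Lemma prune_subset (P : pred N) t t' :
  prune P t = Some t' -> {subset bnodes t' <= bnodes t}.
Proof.
elim: t t' => [x|x l IHl r IHr] t' /=; first by case: (P x) => // -[<-].
case: (P x) => //.
case El: (prune P l) => [l'|]; case Er: (prune P r) => [r'|] // [<-] y;
  rewrite ?inE ?mem_cat.
- by case/or3P=> [->|/(IHl _ El)->|/(IHr _ Er)->]; rewrite ?orbT.
- by move/(IHl _ El) ->; rewrite orbT.
- by move/(IHr _ Er) ->; rewrite !orbT.
Qed.

Lemma bsub_bin_subset x l r v :
  {subset bsub l v ++ bsub r v <= bsub (Bin x l r) v}.
Proof.
move=> z; case: (eqVneq x v) => [<-|xv]; last by rewrite bsub_bin.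
by rewrite /= eqxx inE !mem_cat => /orP[] /bsub_subset ->; rewrite !orbT.
Qed.

Lemma prune_bsub (P : pred N) t t' v :
  prune P t = Some t' -> {subset bsub t' v <= bsub t v}.
Proof.
elim: t t' => [x|x l IHl r IHr] t'; first by rewrite /=; case: (P x) => // -[<-].
rewrite [prune _ _]/=; case: (P x) => //.
case El: (prune P l) => [l'|]; case Er: (prune P r) => [r'|] // [<-] z.
- case: (eqVneq x v) => [<-|xv].
    rewrite /= eqxx !inE !mem_cat.
    by case/or3P=> [->|/(prune_subset El)->|/(prune_subset Er)->]; rewrite ?orbT.
  rewrite bsub_bin // mem_cat => /orP[/(IHl _ El)|/(IHr _ Er)] zs;
  by apply: bsub_bin_subset; rewrite mem_cat zs ?orbT.
- by move/(IHl _ El) => zs; apply: bsub_bin_subset; rewrite mem_cat zs.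
- by move/(IHr _ Er) => zs; apply: bsub_bin_subset; rewrite mem_cat zs orbT.
Qed.

Lemma bsub_monotone (T : Type) (le : T -> T -> Prop) (f : N -> T) t :
  (forall a b c, le a b -> le b c -> le a c) ->
  uniq (bnodes t) ->
  {in bnodes t, forall y, le (f y) (f y)} ->
  (forall v a b, bkids t v = Some (a, b) -> le (f a) (f v) /\ le (f b) (f v)) ->
  forall v y, y \in bsub t v -> le (f y) (f v).
Proof.
move=> le_trans; elim: t => [x|x l IHl r IHr] U le_refl le_kids v y.
  rewrite /=; case: eqP => // <-; rewrite inE => /eqP ->.
  by apply: le_refl; rewrite mem_head.
case/uniq_bin: (U) => _ _ ul ur _.
have sub_l : {subset bnodes l <= bnodes (Bin x l r)}.
  by move=> z zl; rewrite inE mem_cat zl orbT.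
have sub_r : {subset bnodes r <= bnodes (Bin x l r)}.
  by move=> z zr; rewrite inE mem_cat zr !orbT.
have {}IHl := IHl ul (sub_in1 sub_l le_refl)
  (fun w a b E => le_kids w a b (bkids_binl U E)).
have {}IHr := IHr ur (sub_in1 sub_r le_refl)
  (fun w a b E => le_kids w a b (bkids_binr U E)).
have [le_l le_r] : le (f (root_id l)) (f x) /\ le (f (root_id r)) (f x).
  by apply: le_kids; rewrite /= eqxx.
case: (eqVneq x v) => [<-|xv]; last by rewrite bsub_bin // mem_cat => /orP[/IHl|/IHr].
rewrite /= eqxx inE mem_cat => /or3P[/eqP->|yl|yr].
- by apply: le_refl; rewrite mem_head.
- by apply: le_trans le_l; apply: IHl; rewrite bsub_root_id.
- by apply: le_trans le_r; apply: IHr; rewrite bsub_root_id.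
Qed.

End BinaryTrees.

Section PlantedTree.
Variable NS : eqType.
Variable S : ptree_t NS.
Hypothesis wfS : wf_tree S.

Lemma proot_notin_ptree : proot S \notin bnodes (ptree S).
Proof. by case/andP: wfS. Qed.

Lemma uniq_ptree : uniq (bnodes (ptree S)).
Proof. by case/andP: wfS. Qed.

Lemma tree_le_refl a : a \in pnodes S -> tree_le S a a.
Proof.
case: (eqVneq a (proot S)) => [->|ne]; first by left.
by rewrite inE (negbTE ne) => /bsub_self; right; split=> //; apply/eqP.
Qed.

Lemma tree_le_mem z b : tree_le S z b -> z \in pnodes S /\ b \in pnodes S.
Proof.
case=> [[-> zS]|[_ zb]]; first by rewrite mem_head.
by rewrite !inE (node_of_bsub zb) (bsub_subset zb) !orbT.
Qed.

Lemma tree_le_trans z y x : tree_le S z y -> tree_le S y x -> tree_le S z x.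
Proof.
move=> zy [[-> _]|[xr yx]]; first by left; split=> //; case: (tree_le_mem zy).
right; split=> //; case: zy => [[yr _]|[_ zy]];
  last exact: bsub_trans uniq_ptree yx _ zy.
by move: proot_notin_ptree; rewrite -yr (bsub_subset yx).
Qed.

Lemma tree_le_kids p a b :
  kids S p = Some (a, b) -> tree_le S a p /\ tree_le S b p.
Proof.
move=> pab; have pr : p <> proot S.
  by move=> pr; move: proot_notin_ptree; rewrite -pr (bkids_node pab).
by case: (bkids_bsub pab) => ap bp; split; right.
Qed.

Lemma tree_le_comparable z a b :
  tree_le S z a -> tree_le S z b -> tree_comparable S a b.
Proof.
move=> za zb; case: (za) => [[-> _]|[ar za']].
  by right; left; split=> //; case: (tree_le_mem zb).
case: zb => [[-> _]|[br zb]].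
  by left; left; split=> //; case: (tree_le_mem za).
by case: (bsub_nested uniq_ptree za' zb) => ?; [left|right]; right.
Qed.

Lemma consistent_bsub_le (NG : eqType) (G' : ptree_t NG) (rho : NG -> NS) :
  wf_tree G' -> {in pnodes G', forall x, rho x \in pnodes S} ->
  consistent G' S rho ->
  forall v y, y \in bsub (ptree G') v -> tree_le S (rho y) (rho v).
Proof.
move=> /andP[_ uG'] rhoS [_ rho_kids].
have rho_refl : {in bnodes (ptree G'), forall y, tree_le S (rho y) (rho y)}.
  by move=> y yG'; apply/tree_le_refl/rhoS; rewrite inE yG' orbT.
apply: (bsub_monotone tree_le_trans uG' rho_refl) => v a b vab.
case: (rho_kids _ _ _ vab) => [[<- <-]|/tree_le_kids //].
by split; apply: rho_refl; apply: bkids_node vab.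
Qed.

End PlantedTree.

Lemma reconciliation_leaf_le (NG NS : eqType) (G G' : ptree_t NG)
    (S : ptree_t NS) (phi rho : NG -> NS) (delta : NG -> option NG) x l :
  wf_tree S -> reconciliation G G' S phi rho delta ->
  l \in pleaves G -> l \in bsub (ptree G) x -> tree_le S (phi l) (rho x).
Proof.
move=> wfS [wfG' [[P [_ pruneG]] [rhoS [rho_cons [rho_leaves _]]]]] lG lx.
rewrite -rho_leaves //.
exact: (consistent_bsub_le wfS wfG' rhoS rho_cons (prune_bsub pruneG lx)).
Qed.

Theorem lemma5 (NG NS : eqType) (G : ptree_t NG) (S : ptree_t NS) (phi : NG -> NS)
    (G1 : ptree_t NG) (rho1 : NG -> NS) (delta1 : NG -> option NG)
    (G2 : ptree_t NG) (rho2 : NG -> NS) (delta2 : NG -> option NG) (x : NG) :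
  wf_tree G -> wf_tree S ->
  (forall y, y \in pleaves G -> phi y \in pleaves S) ->
  reconciliation G G1 S phi rho1 delta1 ->
  reconciliation G G2 S phi rho2 delta2 ->
  x \in pnodes G ->
  tree_comparable S (rho1 x) (rho2 x).
Proof.
move=> _ wfS _ R1 R2; case: (eqVneq x (proot G)) => [-> _|xr].
  case: R1 => _ [[_ [eG1 _]] [_ [[rho1r _] _]]].
  case: R2 => _ [[_ [eG2 _]] [_ [[rho2r _] _]]].
  rewrite {1}eG1 rho1r eG2 rho2r.
  by left; apply: tree_le_refl; rewrite mem_head.
rewrite inE (negbTE xr) => /bsub_leaf[l lG lx].
exact: (tree_le_comparable wfS (reconciliation_leaf_le wfS R1 lG lx)
  (reconciliation_leaf_le wfS R2 lG lx)).
Qed.
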